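(* Let $N\ge 1$ be an integer and $h,g>0$ real numbers. For $k\in\{0,1,\dots,N\}$ and $\Delta>0$ define $$R_k(\Delta):=\log\Big(1+(N-k)\frac{h^2}{1+\Delta}\Big)+\log(1+kg^2)-k\log\Big(\frac{1+\Delta}{\Delta}\Big)$$ (logarithms base $2$), and let $\Delta^*_{0N}$ be the positive root of $R_0(\Delta)=R_N(\Delta)$. Then $\Delta^*_{0N}$ attains $\max_{\Delta>0}\min_{k\in\{0,\dots,N\}}R_k(\Delta)$, and this optimal value equals $R_0(\Delta^*_{0N})$.
   Context: This is the optimal common quantization distortion for quantize-map-and-forward in the symmetric $N$-relay diamond network (all source-relay channel magnitudes equal $h$, all relay-destination magnitudes equal $g$); $R_k(\Delta)$ is the rate of a cut containing $k$ relays when every relay uses Gaussian quantization distortion $\Delta$, and the equation $R_0(\Delta)=R_N(\Delta)$ has exactly one positive root. *)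

From Stdlib Require Import Reals List.
Open Scope R_scope.

Definition log2 (x : R) : R := ln x / ln 2.

(* Rate of a cut containing k relays, all relays using distortion D. *)
Definition Rcut (N : nat) (h g : R) (k : nat) (D : R) : R :=
  log2 (1 + INR (N - k) * (h ^ 2 / (1 + D)))
  + log2 (1 + INR k * g ^ 2)
  - INR k * log2 ((1 + D) / D).

Definition minRcut (N : nat) (h g : R) (D : R) : R :=
  fold_left Rmin (map (fun k => Rcut N h g k D) (seq 1 N)) (Rcut N h g 0 D).

(* For fixed distortion D, R_k(D) lies above the chord joining R_0(D) and R_N(D) as k runs
   over 0..N: both logarithmic terms are concave in k and the penalty is linear in k.  At Dstar,
   where R_0 = R_N, the chord is constant, so the minimum over all cuts is R_0(Dstar).  Moreover
   R_0 decreases and R_N increases with D; hence for D >= Dstar the minimum is at most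
   R_0(D) <= R_0(Dstar), and for D <= Dstar it is at most R_N(D) <= R_N(Dstar) = R_0(Dstar). *)
From Stdlib Require Import Reals List Lra Lia.
Open Scope R_scope.

Lemma ln_le_sub1 x : 0 < x -> ln x <= x - 1.
Proof.
  intros Hx. pose proof (exp_ineq1_le (ln x)) as H.
  rewrite exp_ln in H; lra.
Qed.

(* Apply [ln_le_sub1] to [u / m] and [v / m], [m] the weighted mean: the weighted sum of the
   right-hand sides vanishes. *)
Lemma ln_concave u v t : 0 < u -> 0 < v -> 0 <= t <= 1 ->
  (1 - t) * ln u + t * ln v <= ln ((1 - t) * u + t * v).
Proof.
  intros Hu Hv Ht. set (m := (1 - t) * u + t * v).
  assert (Hm : 0 < m) by (unfold m; nra).
  pose proof (ln_le_sub1 (u / m) (Rdiv_pos_pos u m Hu Hm)) as Hum.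
  pose proof (ln_le_sub1 (v / m) (Rdiv_pos_pos v m Hv Hm)) as Hvm.
  unfold Rdiv in Hum, Hvm.
  rewrite ln_mult, ln_Rinv in Hum, Hvm by (auto; apply Rinv_0_lt_compat; lra).
  assert (Hmean : (1 - t) * (u * / m - 1) + t * (v * / m - 1) = 0)
    by (unfold m in Hm |- *; field; lra).
  nra.
Qed.

Lemma ln2_pos : 0 < ln 2.
Proof. pose proof ln_lt_2; lra. Qed.

Lemma log2_1 : log2 1 = 0.
Proof. unfold log2; rewrite ln_1; unfold Rdiv; ring. Qed.

Lemma log2_le_compat x y : 0 < x -> x <= y -> log2 x <= log2 y.
Proof.
  intros Hx Hxy. unfold log2, Rdiv.
  apply Rmult_le_compat_r; [left; apply Rinv_0_lt_compat, ln2_pos |].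
  destruct Hxy as [Hlt | ->]; [left; now apply ln_increasing | lra].
Qed.

Lemma log2_1_plus_scale s t : 0 <= s -> 0 <= t <= 1 ->
  t * log2 (1 + s) <= log2 (1 + t * s).
Proof.
  intros Hs Ht.
  pose proof (ln_concave 1 (1 + s) t Rlt_0_1 ltac:(lra) Ht) as Hconc.
  rewrite ln_1 in Hconc.
  replace ((1 - t) * 1 + t * (1 + s)) with (1 + t * s) in Hconc by ring.
  unfold log2, Rdiv. pose proof (Rinv_0_lt_compat _ ln2_pos). nra.
Qed.

Lemma fold_left_Rmin_le_init l a : fold_left Rmin l a <= a.
Proof.
  revert a; induction l as [|x l IHl]; intros a; simpl; [lra |].
  eapply Rle_trans; [apply IHl | apply Rmin_l].
Qed.

Lemma fold_left_Rmin_le_In l a x : In x l -> fold_left Rmin l a <= x.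
Proof.
  revert a; induction l as [|y l IHl]; intros a Hx; simpl in *; [contradiction |].
  destruct Hx as [<- | Hx]; [| auto].
  eapply Rle_trans; [apply fold_left_Rmin_le_init | apply Rmin_r].
Qed.

Lemma fold_left_Rmin_glb l a m :
  m <= a -> (forall x, In x l -> m <= x) -> m <= fold_left Rmin l a.
Proof.
  revert a; induction l as [|x l IHl]; intros a Ha Hl; simpl in *; [assumption |].
  apply IHl; [apply Rmin_glb |]; auto.
Qed.

Section Cuts.

Variables (N : nat) (h g : R).

Lemma Rcut_0 D : Rcut N h g 0 D = log2 (1 + INR N * (h ^ 2 / (1 + D))).
Proof.
  unfold Rcut. rewrite Nat.sub_0_r. simpl INR at 2 3.
  rewrite !Rmult_0_l, Rplus_0_r, log2_1. ring.
Qed.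

Lemma Rcut_N D :
  Rcut N h g N D = log2 (1 + INR N * g ^ 2) - INR N * log2 ((1 + D) / D).
Proof.
  unfold Rcut. rewrite Nat.sub_diag. simpl INR at 1.
  rewrite Rmult_0_l, Rplus_0_r, log2_1. ring.
Qed.

Lemma Rcut_ge_chord k D : (1 <= N)%nat -> (k <= N)%nat -> 0 < D ->
  let t := INR k / INR N in
  (1 - t) * Rcut N h g 0 D + t * Rcut N h g N D <= Rcut N h g k D.
Proof.
  intros HN Hk HD t. rewrite Rcut_0, Rcut_N. unfold Rcut.
  assert (HNpos : 0 < INR N) by (apply lt_0_INR; lia).
  assert (Hweight : t * INR N = INR k) by (unfold t; field; lra).
  assert (Ht : 0 <= t <= 1)
    by (pose proof (le_INR _ _ Hk); pose proof (pos_INR k); split; nra).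
  set (a := h ^ 2 / (1 + D)). set (c := log2 ((1 + D) / D)).
  assert (Ha : 0 <= a) by (apply Rle_mult_inv_pos; [nra | lra]).
  pose proof (log2_1_plus_scale (INR N * a) (1 - t) ltac:(nra) ltac:(lra)) as Hsrc.
  pose proof (log2_1_plus_scale (INR N * g ^ 2) t ltac:(nra) Ht) as Hdst.
  replace ((1 - t) * (INR N * a)) with (INR (N - k) * a) in Hsrc
    by (rewrite minus_INR by assumption; rewrite <- Hweight; ring).
  replace (t * (INR N * g ^ 2)) with (INR k * g ^ 2) in Hdst
    by (rewrite <- Hweight; ring).
  assert (Hpenalty : t * (INR N * c) = INR k * c) by (rewrite <- Hweight; ring).
  lra.
Qed.

Lemma Rcut_0_antimono D1 D2 : 0 < D1 -> D1 <= D2 -> Rcut N h g 0 D2 <= Rcut N h g 0 D1.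
Proof.
  intros HD1 HD12. rewrite !Rcut_0.
  assert (Hle : h ^ 2 / (1 + D2) <= h ^ 2 / (1 + D1)).
  { unfold Rdiv. apply Rmult_le_compat_l; [nra | apply Rinv_le_contravar; lra]. }
  assert (Hnonneg : 0 <= h ^ 2 / (1 + D2)).
  { apply Rle_mult_inv_pos; [nra | lra]. }
  pose proof (pos_INR N).
  apply log2_le_compat; [nra |].
  apply Rplus_le_compat_l, Rmult_le_compat_l; assumption.
Qed.

Lemma Rcut_N_mono D1 D2 : 0 < D1 -> D1 <= D2 -> Rcut N h g N D1 <= Rcut N h g N D2.
Proof.
  intros HD1 HD12. rewrite !Rcut_N.
  apply Rplus_le_compat_l, Ropp_le_contravar, Rmult_le_compat_l; [apply pos_INR |].
  replace ((1 + D1) / D1) with (/ D1 + 1) by (field; lra).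
  replace ((1 + D2) / D2) with (/ D2 + 1) by (field; lra).
  apply log2_le_compat; [pose proof (Rinv_0_lt_compat D2 ltac:(lra)); lra |].
  apply Rplus_le_compat_r, Rinv_le_contravar; lra.
Qed.

Lemma minRcut_le_Rcut k D : (k <= N)%nat -> minRcut N h g D <= Rcut N h g k D.
Proof.
  intros Hk. unfold minRcut. destruct k as [|k].
  - apply fold_left_Rmin_le_init.
  - apply fold_left_Rmin_le_In, (in_map (fun k => Rcut N h g k D)), in_seq. lia.
Qed.

Lemma minRcut_glb m D :
  (forall k, (k <= N)%nat -> m <= Rcut N h g k D) -> m <= minRcut N h g D.
Proof.
  intros Hm. apply fold_left_Rmin_glb; [apply Hm; lia |].
  intros x Hx. apply in_map_iff in Hx as [k [<- Hk]].
  apply in_seq in Hk. apply Hm. lia.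
Qed.

End Cuts.

Theorem theorem2 (N : nat) (h g Dstar : R) :
  (1 <= N)%nat -> 0 < h -> 0 < g ->
  0 < Dstar -> Rcut N h g 0 Dstar = Rcut N h g N Dstar ->
  (forall D : R, 0 < D -> minRcut N h g D <= minRcut N h g Dstar) /\
  minRcut N h g Dstar = Rcut N h g 0 Dstar.
Proof.
  intros HN _ _ HDstar Heq.
  assert (Hmin : minRcut N h g Dstar = Rcut N h g 0 Dstar).
  { apply Rle_antisym; [apply minRcut_le_Rcut; lia |].
    apply minRcut_glb. intros k Hk.
    pose proof (Rcut_ge_chord N h g k Dstar HN Hk HDstar) as Hchord.
    simpl in Hchord. rewrite <- Heq in Hchord. lra. }
  split; [| exact Hmin].
  intros D HD. rewrite Hmin.
  destruct (Rle_dec Dstar D) as [Hle | Hgt].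
  - eapply Rle_trans; [apply (minRcut_le_Rcut N h g 0); lia |].
    now apply Rcut_0_antimono.
  - eapply Rle_trans; [apply (minRcut_le_Rcut N h g N); lia |].
    rewrite Heq. apply Rcut_N_mono; lra.
Qed.
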